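(* Let $V^{2n}$ be a real vector space with $J\in\mathrm{Aut}(V)$, $J^2=-I$, and a positive definite inner product $(\,,\,)$ for which $J$ is an isometry. Let $\mathbb{L}^p$, $p\geq 2$, be a real vector space with a Lorentzian inner product $\langle\,,\,\rangle$, let $\alpha\colon V^{2n}\times V^{2n}\to\mathbb{L}^p$ be a symmetric bilinear form, and suppose there is a light-like vector $w\in\mathbb{L}^p$ with $\langle\alpha(X,Y),w\rangle=-(X,Y)$ for all $X,Y\in V^{2n}$. Let $\beta\colon V^{2n}\times V^{2n}\to W^{p,p}$ be the associated form (see context), assume $\beta$ is flat and that $\mathcal{S}(\beta)$ is degenerate, and let $v\in U_0^s$ be a light-like vector with $\mathcal{S}(\beta)\cap\mathcal{S}(\beta)^\perp=\mathrm{span}\{v\}\oplus\mathrm{span}\{v\}$. Then $L=\mathrm{span}\{v,w\}\subset\mathbb{L}^p$ is a Lorentzian plane. Moreover, normalizing $v$ so that $\langle v,w\rangle=-1$ and setting $\beta_1=\pi_{L^\perp\times L^\perp}\circ\beta$, we have $$\beta(X,Y)=\beta_1(X,Y)+2\big((X,Y)v,(X,JY)v\big)\quad\text{for all }X,Y\in V^{2n}.$$ Furthermore, if $s\leq n$ then $\dim\mathcal{N}(\beta_1)\geq 2n-2s+2$.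
   Context: $W^{p,p}=\mathbb{L}^p\oplus\mathbb{L}^p$ carries the inner product $\langle\!\langle(\xi,\bar\xi),(\eta,\bar\eta)\rangle\!\rangle=\langle\xi,\eta\rangle-\langle\bar\xi,\bar\eta\rangle$. The associated form is $\beta(X,Y)=(\alpha(X,Y)+\alpha(JX,JY),\ \alpha(X,JY)-\alpha(JX,Y))$. $\beta$ is flat if $\langle\!\langle\beta(X,Y),\beta(Z,T)\rangle\!\rangle-\langle\!\langle\beta(X,T),\beta(Z,Y)\rangle\!\rangle=0$ for all $X,Y,Z,T$. $\mathcal{S}(\beta)=\mathrm{span}\{\beta(X,Y):X,Y\in V\}$; a subspace $S$ of $W^{p,p}$ is degenerate if $S\cap S^\perp\neq 0$ ($\perp$ w.r.t. $\langle\!\langle\,,\,\rangle\!\rangle$). $U_0^s=\pi_1(\mathcal{S}(\beta))\subset\mathbb{L}^p$ is the projection of $\mathcal{S}(\beta)$ onto the first factor and $s=\dim U_0^s$ (it is known that $\mathcal S(\beta)=U_0^s\oplus U_0^s$ and that, when $\mathcal S(\beta)$ is degenerate, a light-like $v$ as in the claim exists). $\pi_{L^\perp\times L^\perp}$ is the orthogonal projection of $W^{p,p}$ onto $L^\perp\oplus L^\perp$ (componentwise orthogonal projection onto $L^\perp\subset\mathbb{L}^p$). For a bilinear form $\theta$, $\mathcal{N}(\theta)=\{Y:\theta(X,Y)=0\ \forall X\}$ is its right kernel. *)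

From HB Require Import structures.
From mathcomp Require Import all_boot all_order all_algebra.
From mathcomp Require Import reals.
Set Implicit Arguments. Unset Strict Implicit. Unset Printing Implicit Defensive.
Import Order.TTheory GRing.Theory Num.Theory.
Local Open Scope ring_scope.

(* Vectors are ROW vectors; a linear map given by a matrix A acts as x |-> x *m A. *)

Definition bform (R : realType) (m : nat) (B : 'M[R]_m) (x y : 'rV[R]_m) : R :=
  (x *m B *m y^T) 0 0.

Definition pos_def (R : realType) (m : nat) (B : 'M[R]_m) : Prop :=
  B^T = B /\ forall x : 'rV[R]_m, x != 0 -> 0 < bform B x x.

(* The symmetric form B is Lorentzian (signature (-,+,...,+)) on the
   subspace given by the predicate P: there is a time-like t in P whose
   orthogonal complement in P is positive definite. *)
Definition lorentzian_on (R : realType) (m : nat) (B : 'M[R]_m)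
    (P : 'rV[R]_m -> Prop) : Prop :=
  exists t, P t /\ bform B t t < 0 /\
    forall x, P x -> bform B x t = 0 -> x != 0 -> 0 < bform B x x.

Definition lorentzian (R : realType) (m : nat) (B : 'M[R]_m) : Prop :=
  B^T = B /\ lorentzian_on B (fun _ => True).

Definition light_like (R : realType) (m : nat) (B : 'M[R]_m) (x : 'rV[R]_m) :=
  x != 0 /\ bform B x x = 0.

Definition span2 (R : realType) (m : nat) (u v : 'rV[R]_m) (x : 'rV[R]_m) : Prop :=
  exists a b : R, x = a *: u + b *: v.

Definition lorentzian_plane (R : realType) (m : nat) (B : 'M[R]_m)
    (u v : 'rV[R]_m) : Prop :=
  free [:: u; v] /\ lorentzian_on B (span2 u v).

Definition dim_ge (R : realType) (m : nat) (P : 'rV[R]_m -> Prop) (k : nat) : Prop :=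
  exists X : seq 'rV[R]_m, size X = k /\ (forall x, x \in X -> P x) /\ free X.

Definition has_dim (R : realType) (m : nat) (P : 'rV[R]_m -> Prop) (k : nat) : Prop :=
  dim_ge P k /\ ~ dim_ge P k.+1.

(* W^{p,p} = L^p (+) L^p and its inner product <<,>> *)
Definition Wip (R : realType) (p : nat) (M : 'M[R]_p)
    (x y : 'rV[R]_p * 'rV[R]_p) : R :=
  bform M x.1 y.1 - bform M x.2 y.2.

Definition beta (R : realType) (m p : nat) (J : 'M[R]_m)
    (alpha : 'rV[R]_m -> 'rV[R]_m -> 'rV[R]_p) (X Y : 'rV[R]_m)
    : 'rV[R]_p * 'rV[R]_p :=
  (alpha X Y + alpha (X *m J) (Y *m J), alpha X (Y *m J) - alpha (X *m J) Y).

Definition flat (R : realType) (m p : nat) (M : 'M[R]_p)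
    (b : 'rV[R]_m -> 'rV[R]_m -> 'rV[R]_p * 'rV[R]_p) : Prop :=
  forall X Y Z T, Wip M (b X Y) (b Z T) - Wip M (b X T) (b Z Y) = 0.

Definition inS (R : realType) (m p : nat)
    (b : 'rV[R]_m -> 'rV[R]_m -> 'rV[R]_p * 'rV[R]_p)
    (z : 'rV[R]_p * 'rV[R]_p) : Prop :=
  exists (k : nat) (c : 'I_k -> R) (X Y : 'I_k -> 'rV[R]_m),
    z = \sum_(i < k) c i *: b (X i) (Y i).

Definition inSperp (R : realType) (m p : nat) (M : 'M[R]_p)
    (b : 'rV[R]_m -> 'rV[R]_m -> 'rV[R]_p * 'rV[R]_p)
    (z : 'rV[R]_p * 'rV[R]_p) : Prop :=
  forall u, inS b u -> Wip M z u = 0.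

Definition degenerate (R : realType) (m p : nat) (M : 'M[R]_p)
    (b : 'rV[R]_m -> 'rV[R]_m -> 'rV[R]_p * 'rV[R]_p) : Prop :=
  exists z, z != 0 /\ inS b z /\ inSperp M b z.

(* U_0^s = pi_1(S(b)) *)
Definition inU0 (R : realType) (m p : nat)
    (b : 'rV[R]_m -> 'rV[R]_m -> 'rV[R]_p * 'rV[R]_p) (x : 'rV[R]_p) : Prop :=
  exists y, inS b (x, y).

Definition is_orth_proj_perp (R : realType) (p : nat) (M : 'M[R]_p)
    (u v : 'rV[R]_p) (pi : 'rV[R]_p -> 'rV[R]_p) : Prop :=
  forall x, (forall l, span2 u v l -> bform M (pi x) l = 0) /\ span2 u v (x - pi x).

Definition right_kernel (R : realType) (m p : nat)
    (theta : 'rV[R]_m -> 'rV[R]_m -> 'rV[R]_p * 'rV[R]_p) (Y : 'rV[R]_m) : Prop :=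
  forall X, theta X Y = 0.

(* Since v spans the degenerate part of S(beta), it is orthogonal to both components of every
   beta(X, Y), while <beta(X, X)_1, w> = -2 |X|^2. Two orthogonal light-like vectors of a
   Lorentzian space are proportional, so <v, w> <> 0 and span{v, w} is a Lorentzian plane. Each
   component of beta, being orthogonal to v, is its projection to L^perp plus the multiple of v
   read off from its inner product with w.
   The projected form beta1 is flat, takes values in the positive definite L^perp (+) L^perp and
   keeps the symmetry beta(Y, X) = (beta(X, Y)_1, - beta(X, Y)_2). For X0 of maximal rank the
   kernel of beta1(X0, .) lies in N(beta1): for y in it, regularity puts beta1(y, y) in the image
   of beta1(X0, .), flatness makes it orthogonal to that image, positivity kills it, and flatness
   once more gives beta1(y, .) = 0. Both components of beta1(X0, .) take values in pi(U_0^s),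
   of dimension at most s - 1 since pi v = 0, so N(beta1) has dimension at least 2n - 2(s - 1). *)

From HB Require Import structures.
From mathcomp Require Import all_boot all_order all_algebra.
From mathcomp Require Import reals.
From mathcomp Require Import ring lra zify.
From Stdlib Require Import Classical.

Set Implicit Arguments.
Unset Strict Implicit.
Unset Printing Implicit Defensive.

Import Order.TTheory GRing.Theory Num.Theory.
Local Open Scope ring_scope.

Section BilinearForm.
Variables (R : realType) (m : nat) (B : 'M[R]_m).

Lemma bformDl x y z : bform B (x + y) z = bform B x z + bform B y z.
Proof. by rewrite /bform !mulmxDl mxE. Qed.

Lemma bformDr x y z : bform B z (x + y) = bform B z x + bform B z y.
Proof. by rewrite /bform linearD /= mulmxDr mxE. Qed.

Lemma bformZl a x z : bform B (a *: x) z = a * bform B x z.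
Proof. by rewrite /bform -!scalemxAl mxE. Qed.

Lemma bformZr a x z : bform B z (a *: x) = a * bform B z x.
Proof. by rewrite /bform linearZ /= -scalemxAr mxE. Qed.

Lemma bformNl x z : bform B (- x) z = - bform B x z.
Proof. by rewrite -scaleN1r bformZl mulN1r. Qed.

Lemma bformNr x z : bform B z (- x) = - bform B z x.
Proof. by rewrite -scaleN1r bformZr mulN1r. Qed.

Lemma bform0l z : bform B 0 z = 0.
Proof. by rewrite -(scale0r 0) bformZl mul0r. Qed.

Lemma bform0r z : bform B z 0 = 0.
Proof. by rewrite -(scale0r 0) bformZr mul0r. Qed.

Lemma bformC : B^T = B -> forall x y, bform B x y = bform B y x.
Proof.
move=> B_sym x y; have tr00 (A : 'M[R]_1) : A 0 0 = A^T 0 0 by rewrite mxE.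
by rewrite /bform tr00 !trmx_mul trmxK B_sym mulmxA.
Qed.

End BilinearForm.

Ltac bform_expand :=
  rewrite ?(bformDl, bformDr, bformZl, bformZr, bformNl, bformNr, bform0l, bform0r).

Lemma bounded_argmax (T : Type) (f : T -> nat) (b : nat) (x0 : T) :
  (forall x, (f x <= b)%N) -> exists x1, forall x, (f x <= f x1)%N.
Proof.
move=> f_le_b; have [k] : exists k, (b - f x0 <= k)%N by exists (b - f x0)%N.
elim: k x0 => [|k IH] x0 le_k.
  by exists x0 => x; have := f_le_b x; lia.
have [[x lt_x]|no_x] := classic (exists x, (f x0 < f x)%N).
  by apply: (IH x); have := f_le_b x; lia.
exists x0 => x; rewrite leqNgt; apply/negP => lt_x; apply: no_x; by exists x.
Qed.

Section Lorentzian.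
Variables (R : realType) (m : nat) (B : 'M[R]_m).
Hypothesis B_lor : lorentzian B.

Let B_sym x y : bform B x y = bform B y x.
Proof. by apply: bformC; case: B_lor. Qed.

Lemma lorentzian_null_orth_colinear v w :
  light_like B v -> light_like B w -> bform B v w = 0 -> exists c, v = c *: w.
Proof.
case: B_lor => _ [t [_ [_ t_perp_pos]]] [v_neq0 v_null] [w_neq0 w_null] vw0.
set a := bform B v t; set b := bform B w t.
have a_neq0 : a != 0.
  by apply/eqP => a0; have := t_perp_pos v I a0 v_neq0; rewrite v_null ltxx.
have b_neq0 : b != 0.
  by apply/eqP => b0; have := t_perp_pos w I b0 w_neq0; rewrite w_null ltxx.
have comb0 : b *: v - a *: w = 0.
  apply/eqP; apply: contraT => comb_neq0.
  have comb_t : bform B (b *: v - a *: w) t = 0 by bform_expand; rewrite -/a -/b; ring.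
  have := t_perp_pos _ I comb_t comb_neq0; bform_expand.
  by rewrite v_null w_null vw0 B_sym vw0; lra.
exists (a / b); apply: (scalerI b_neq0).
by rewrite scalerA mulrC divfK //; apply/eqP; rewrite -subr_eq0 comb0.
Qed.

Lemma lorentzian_orth_timelike_pos u x :
  bform B u u < 0 -> bform B x u = 0 -> x != 0 -> 0 < bform B x x.
Proof.
case: B_lor => _ [t [_ [_ t_perp_pos]]] u_time xu x_neq0.
rewrite ltNge; apply/negP => x_npos.
set a := bform B x t; set b := bform B u t.
have y_t : bform B (a *: u - b *: x) t = 0 by bform_expand; rewrite -/a -/b; ring.
have y_npos : bform B (a *: u - b *: x) (a *: u - b *: x) <= 0.
  bform_expand; rewrite (B_sym u x) xu.
  have : a * a * bform B u u <= 0 by rewrite -mulrA; nra.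
  nra.
have y0 : a *: u - b *: x = 0.
  apply/eqP; apply: contraT => y_neq0.
  by have := t_perp_pos _ I y_t y_neq0; rewrite ltNge y_npos.
have a0 : a = 0.
  have : bform B (a *: u - b *: x) u = 0 by rewrite y0 bform0l.
  bform_expand; rewrite xu mulr0 subr0 => /eqP; rewrite mulf_eq0 => /orP[/eqP //|/eqP uu0].
  by move: u_time; rewrite uu0 ltxx.
have b0 : b = 0.
  move: y0; rewrite a0 scale0r sub0r => /eqP; rewrite oppr_eq0 scaler_eq0.
  by rewrite (negbTE x_neq0) orbF => /eqP.
have u_neq0 : u != 0 by apply: contraTneq u_time => ->; rewrite bform0l ltxx.
by have := t_perp_pos u I b0 u_neq0; rewrite ltNge (ltW u_time).
Qed.

End Lorentzian.

Section NullPair.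
Variables (R : realType) (m : nat) (B : 'M[R]_m) (v w : 'rV[R]_m).
Hypotheses (B_sym : B^T = B) (v_null : bform B v v = 0) (w_null : bform B w w = 0).
Hypothesis vw_neq0 : bform B v w != 0.
Local Notation k := (bform B v w).

Lemma bform_span2_v a b : bform B (a *: v + b *: w) v = b * k.
Proof. by bform_expand; rewrite v_null (bformC B_sym); ring. Qed.

Lemma bform_span2_w a b : bform B (a *: v + b *: w) w = a * k.
Proof. by bform_expand; rewrite w_null; ring. Qed.

Lemma span2_orth_eq0 d :
  span2 v w d -> bform B d v = 0 -> bform B d w = 0 -> d = 0.
Proof.
move=> [a [b ->]]; rewrite bform_span2_v bform_span2_w.
move=> /eqP; rewrite mulf_eq0 (negbTE vw_neq0) orbF => /eqP ->.
move=> /eqP; rewrite mulf_eq0 (negbTE vw_neq0) orbF => /eqP ->.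
by rewrite !scale0r addr0.
Qed.

Lemma null_pair_timelike : bform B (1 *: v + (- k) *: w) (1 *: v + (- k) *: w) < 0.
Proof.
have kk_gt0 : 0 < k * k by rewrite lt_def mulf_neq0 //= -expr2 sqr_ge0.
by rewrite bformDr !bformZr bform_span2_v bform_span2_w; lra.
Qed.

Lemma null_pair_lorentzian_plane : lorentzian_plane B v w.
Proof.
have kk_gt0 : 0 < k * k by rewrite lt_def mulf_neq0 //= -expr2 sqr_ge0.
split.
  rewrite free_cons span_seq1 seq1_free; apply/andP; split.
    by apply/vlineP => -[c vc]; move: vw_neq0; rewrite vc bformZl w_null mulr0 eqxx.
  by apply: contraNneq vw_neq0 => w0; rewrite w0 bform0r.
exists (1 *: v + (- k) *: w); split; first by exists 1, (- k).
split; first exact: null_pair_timelike.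
move=> x [a [b ->]]; rewrite bformDr !bformZr bform_span2_v bform_span2_w => x_perp x_neq0.
have b_ak : b = a * k.
  by apply/eqP; rewrite -subr_eq0; apply/eqP/(mulfI vw_neq0); lra.
have a_neq0 : a != 0.
  by apply: contraNneq x_neq0 => a0; rewrite b_ak a0 mul0r !scale0r addr0.
have aa_gt0 : 0 < a * a by rewrite lt_def mulf_neq0 //= -expr2 sqr_ge0.
rewrite bformDr !bformZr bform_span2_v bform_span2_w b_ak; nra.
Qed.

Lemma null_pair_orth_spacelike : lorentzian B -> forall x,
  bform B x v = 0 -> bform B x w = 0 -> x != 0 -> 0 < bform B x x.
Proof.
move=> B_lor x xv xw; apply: (lorentzian_orth_timelike_pos B_lor null_pair_timelike).
by bform_expand; rewrite xv xw; ring.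
Qed.

Variable pi : 'rV[R]_m -> 'rV[R]_m.
Hypothesis pi_proj : is_orth_proj_perp B v w pi.

Lemma span2_comb a x y : span2 v w x -> span2 v w y -> span2 v w (a *: x + y).
Proof.
move=> [a1 [b1 ->]] [a2 [b2 ->]]; exists (a * a1 + a2), (a * b1 + b2).
by rewrite scalerDr !scalerA !scalerDl addrACA.
Qed.

Lemma pi_orth_v x : bform B (pi x) v = 0.
Proof. by apply: (proj1 (pi_proj x)); exists 1, 0; rewrite scale1r scale0r addr0. Qed.

Lemma pi_orth_w x : bform B (pi x) w = 0.
Proof. by apply: (proj1 (pi_proj x)); exists 0, 1; rewrite scale1r scale0r add0r. Qed.

Lemma pi_span2 x : span2 v w x -> pi x = 0.
Proof.
move=> x_span; apply: span2_orth_eq0; [|exact: pi_orth_v|exact: pi_orth_w].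
have -> : pi x = (-1) *: (x - pi x) + x by rewrite scaleN1r opprB subrK.
exact: span2_comb (proj2 (pi_proj x)) x_span.
Qed.

Lemma pi_v0 : pi v = 0.
Proof. by apply: pi_span2; exists 1, 0; rewrite scale1r scale0r addr0. Qed.

Lemma pi_linear a x y : pi (a *: x + y) = a *: pi x + pi y.
Proof.
apply/eqP; rewrite -subr_eq0; apply/eqP/span2_orth_eq0; last 2 first.
- by bform_expand; rewrite !pi_orth_v; ring.
- by bform_expand; rewrite !pi_orth_w; ring.
have -> : pi (a *: x + y) - (a *: pi x + pi y) =
    (-1) *: (a *: x + y - pi (a *: x + y)) + (a *: (x - pi x) + (y - pi y)).
  by apply/rowP => j; rewrite !mxE; ring.
by do 3?apply: span2_comb; apply: (proj2 (pi_proj _)).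
Qed.

Lemma orth_v_proj x : bform B x v = 0 -> exists a, x = pi x + a *: v.
Proof.
have [_ [a [b ab_def]]] := pi_proj x => xv.
have : bform B (x - pi x) v = 0 by rewrite bformDl bformNl xv pi_orth_v subr0.
rewrite ab_def bform_span2_v => /eqP; rewrite mulf_eq0 (negbTE vw_neq0) orbF => /eqP b0.
by exists a; rewrite -[a *: v]addr0 -(scale0r w) -b0 -ab_def addrC subrK.
Qed.

Lemma bform_pi x y : bform B x v = 0 -> bform B y v = 0 ->
  bform B (pi x) (pi y) = bform B x y.
Proof.
move=> /orth_v_proj[a {2}->] /orth_v_proj[b {2}->]; bform_expand.
rewrite !pi_orth_v (bformC B_sym v) pi_orth_v v_null; ring.
Qed.

Lemma pi_oppr x : pi (- x) = - pi x.
Proof.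
have pi0 : pi 0 = 0 by apply: pi_span2; exists 0, 0; rewrite !scale0r addr0.
by have := pi_linear (-1) x 0; rewrite !scaleN1r !addr0 pi0 addr0.
Qed.

Lemma pi_pair_linear a z z' :
  (pi (a *: z + z').1, pi (a *: z + z').2) = a *: (pi z.1, pi z.2) + (pi z'.1, pi z'.2).
Proof. by rewrite /= !pi_linear. Qed.

Lemma Wip_pi z z' :
  bform B z.1 v = 0 /\ bform B z.2 v = 0 -> bform B z'.1 v = 0 /\ bform B z'.2 v = 0 ->
  Wip B (pi z.1, pi z.2) (pi z'.1, pi z'.2) = Wip B z z'.
Proof. by move=> [z1v z2v] [z1v' z2v']; rewrite /Wip /= !bform_pi. Qed.

Lemma orth_v_decomp c x : bform B (c *: v) w = -1 -> bform B x v = 0 ->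
  x = pi x + (- bform B x w) *: (c *: v).
Proof.
rewrite bformZl => cvw /orth_v_proj[a x_def].
rewrite {3}x_def bformDl pi_orth_w add0r bformZl scalerA.
by rewrite mulNr -mulrA (mulrC k) cvw mulrN1 opprK.
Qed.

End NullPair.

Section MatrixPencil.
Variable R : realFieldType.

Lemma rV_mulmx_tr_eq0 l (r : 'rV[R]_l) : r *m r^T = 0 -> r = 0.
Proof.
move/matrixP/(_ 0 0); rewrite !mxE => sum_sq0; apply/rowP => j; rewrite mxE.
have sq_ge0 (i : 'I_l) : true -> 0 <= r 0 i * r^T i 0 by rewrite mxE -expr2 sqr_ge0.
have := @psumr_eq0P _ _ _ _ sq_ge0 sum_sq0 j isT.
by rewrite mxE => /eqP; rewrite mulf_eq0 orbb => /eqP.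
Qed.

Lemma row_free_gram k l (A : 'M[R]_(k, l)) : row_free A = (A *m A^T \in unitmx).
Proof.
rewrite -row_free_unit; apply/idP/idP => freeA; apply/inj_row_free => z.
  move=> zAAt0; apply: (row_free_inj freeA); rewrite mul0mx; apply: rV_mulmx_tr_eq0.
  by rewrite trmx_mul mulmxA -(mulmxA z) zAAt0 mul0mx.
by move=> zA0; apply: (row_free_inj freeA); rewrite mulmxA zA0 !mul0mx.
Qed.

Lemma exists_nonzero_nonroot (q : {poly R}) : q != 0 -> exists2 t, t != 0 & ~~ root q t.
Proof.
move=> q_neq0; pose ts := [seq (i.+1)%:R : R | i <- iota 0 (size q)].
have ts_uniq : uniq ts.
  by rewrite map_inj_uniq ?iota_uniq // => i j /eqP; rewrite eqr_nat eqSS => /eqP.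
have : ~~ all (root q) ts.
  by apply/negP => /(max_poly_roots q_neq0)/(_ ts_uniq); rewrite size_map size_iota ltnn.
by case/allPn => _ /mapP[i _ ->] nonroot; exists i.+1%:R; rewrite ?pnatr_eq0.
Qed.

Lemma row_free_pencil k l (U0 U1 : 'M[R]_(k, l)) :
  row_free U0 -> exists2 t, t != 0 & row_free (U0 + t *: U1).
Proof.
move=> U0_free.
pose Up : 'M[{poly R}]_(k, l) := \matrix_(i, j) ((U0 i j)%:P + 'X * (U1 i j)%:P).
have Up_eval t : map_mx (horner_eval t) Up = U0 + t *: U1.
  apply/matrixP => i j; rewrite !mxE /= horner_evalE.
  by rewrite hornerD hornerM hornerX !hornerC mulrC.
pose q := \det (Up *m Up^T).
have q_eval t : q.[t] = \det ((U0 + t *: U1) *m (U0 + t *: U1)^T).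
  by rewrite -Up_eval map_trmx -map_mxM det_map_mx /= horner_evalE.
have q_neq0 : q != 0.
  apply: contraTneq U0_free => q0.
  by rewrite row_free_gram unitmxE -[U0]addr0 -(scale0r U1) -q_eval q0 horner0 unitr0.
have [t t_neq0 t_nonroot] := exists_nonzero_nonroot q_neq0.
by exists t; rewrite // row_free_gram unitmxE -q_eval unitfE.
Qed.

(* Otherwise a row basis of A0 together with y A1 gives \rank A0 + 1 independent rows of the
   pencil at t = 0; they stay independent for some t <> 0 and lie in the row space of A0 + t A1,
   since y A1 = t^-1 y (A0 + t A1). *)
Lemma max_rank_pencil_sub k l (A0 A1 : 'M[R]_(k, l)) (y : 'rV[R]_k) :
  (forall t, (\rank (A0 + t *: A1)%R <= \rank A0)%N) -> y *m A0 = 0 ->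
  (y *m A1 <= A0)%MS.
Proof.
move=> rank_max yA0; apply: contraT => yA1_notin.
have /submxP[D baseD] : (row_base A0 <= A0)%MS by rewrite eq_row_base.
pose U t := col_mx (D *m (A0 + t *: A1)) (y *m A1).
have U_free0 : row_free (U 0).
  rewrite /row_free /U scale0r addr0 -baseD eqn_leq rank_leq_row /=.
  rewrite -addsmxE addn1 -{1}(eq_row_base A0); apply: rank_ltmx.
  by rewrite ltmxE addsmxSl addsmx_sub submx_refl eq_row_base.
have U_pencil t : U t = U 0 + t *: col_mx (D *m A1) 0.
  by rewrite /U scale_col_mx add_col_mx scaler0 addr0 scale0r !addr0 mulmxDr scalemxAr.
have [t t_neq0] := row_free_pencil (col_mx (D *m A1) 0) U_free0.
rewrite -U_pencil => /eqP U_free.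
have U_sub : (U t <= (A0 + t *: A1)%R)%MS.
  rewrite col_mx_sub; apply/andP; split; first by apply/submxP; exists D.
  apply/submxP; exists (t^-1 *: y).
  by rewrite -scalemxAl mulmxDr yA0 add0r -scalemxAr scalerA mulVf // scale1r.
by have := leq_trans (mxrankS U_sub) (rank_max t); rewrite U_free addn1 ltnn.
Qed.

Lemma mxrank_row_mx_le k l1 l2 (A : 'M[R]_(k, l1)) (B : 'M[R]_(k, l2)) :
  (\rank (row_mx A B) <= \rank A + \rank B)%N.
Proof.
have -> : row_mx A B = row_mx A 0 + row_mx 0 B by rewrite add_row_mx addr0 add0r.
by apply: leq_trans (mxrank_add _ _) _; rewrite rank_row_mx0 rank_row_0mx.
Qed.

Lemma linear_mulmxE k l (f : 'rV[R]_k -> 'rV[R]_l) :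
  (forall a x y, f (a *: x + y) = a *: f x + f y) ->
  forall x, f x = x *m \matrix_(i < k) f (delta_mx 0 i).
Proof.
move=> f_lin x.
have f0 : f 0 = 0.
  have := f_lin 1 0 0; rewrite !scale1r addr0 => f00.
  by apply: (@addrI _ (f 0)); rewrite addr0 -f00.
rewrite mulmx_sum_row {1}(row_sum_delta x).
by elim/big_rec2: _ => [//|i y1 y2 _ <-]; rewrite f_lin rowK.
Qed.

End MatrixPencil.

Lemma mxrank_mul_lt (F : fieldType) r k l
    (U : 'M[F]_(r, k)) (A : 'M[F]_(k, l)) (v : 'rV[F]_k) :
  v != 0 -> (v <= U)%MS -> v *m A = 0 -> (\rank (U *m A) < r)%N.
Proof.
move=> v_neq0 vU vA0.
have v_cap : (v <= U :&: kermx A)%MS by rewrite sub_capmx vU; apply/sub_kermxP.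
rewrite -(leq_add2r (\rank (U :&: kermx A))) addSn mxrank_mul_ker -addn1.
apply: leq_add; first exact: rank_leq_row.
apply: leq_trans (mxrankS v_cap).
by rewrite rank_rV lt0b.
Qed.

Section Dimension.
Variables (R : realType) (m : nat).

Lemma free_rows r (B : 'M[R]_(r, m)) : row_free B -> free [tuple row i B | i < r].
Proof.
move=> B_free; apply/freeP => c c_comb i.
have cB0 : \row_j c j *m B = 0.
  rewrite mulmx_sum_row -[RHS]c_comb; apply: eq_bigr => j _.
  by rewrite mxE -tnth_nth tnth_mktuple.
have := row_free_inj B_free (etrans cB0 (esym (mul0mx _ B))).
by move/rowP/(_ i); rewrite !mxE.
Qed.

Lemma dim_ge_rank (P : 'rV[R]_m -> Prop) r (K : 'M[R]_(r, m)) d :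
  (forall y, (y <= K)%MS -> P y) -> (d <= \rank K)%N -> dim_ge P d.
Proof.
move=> K_P d_le; pose X := [tuple row i (row_base K) | i < \rank K].
exists (take d X); split; first by rewrite size_takel // size_tuple.
split.
  move=> y /mem_take /tnthP[i ->]; rewrite tnth_mktuple; apply: K_P.
  by rewrite -(eq_row_base K) row_sub.
apply: (@catl_free _ _ (drop d X)); rewrite cat_take_drop.
exact/free_rows/row_base_free.
Qed.

Lemma has_dim_sub (P : 'rV[R]_m -> Prop) s :
  has_dim P s -> exists U : 'M[R]_(s, m), forall x, P x -> (x <= U)%MS.
Proof.
move=> [[X [<- [X_P X_free]]] not_dim_ge]; exists (\matrix_(i < size X) X`_i) => x Px.
have x_span : x \in <<X>>%VS.
  apply: contraT => x_notin; exfalso; apply: not_dim_ge; exists (x :: X).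
  split=> //; split; last by rewrite free_cons x_notin X_free.
  by move=> y; rewrite inE => /orP[/eqP -> //|/X_P].
apply/submxP; exists (\row_i coord (in_tuple X) i x).
rewrite mulmx_sum_row {1}(@coord_span _ _ _ (in_tuple X) _ x_span).
by apply: eq_bigr => i _; rewrite mxE rowK.
Qed.

End Dimension.

Section FlatForm.
Variables (R : realType) (m p : nat) (M : 'M[R]_p) (P : 'rV[R]_p -> Prop).
Variable b : 'rV[R]_m -> 'rV[R]_m -> 'rV[R]_p * 'rV[R]_p.
Hypotheses (b_linl : forall a X X' Y, b (a *: X + X') Y = a *: b X Y + b X' Y)
  (b_linr : forall a X Y Y', b X (a *: Y + Y') = a *: b X Y + b X Y')
  (b_swap : forall X Y, b Y X = ((b X Y).1, - (b X Y).2))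
  (b_flat : flat M b)
  (P_pos : forall x, P x -> x != 0 -> 0 < bform M x x)
  (b_in_P : forall X Y, P (b X Y).1 /\ P (b X Y).2).

Definition row_pair (z : 'rV[R]_p * 'rV[R]_p) : 'rV[R]_(p + p) := row_mx z.1 z.2.

Lemma row_pair_linear a z z' : row_pair (a *: z + z') = a *: row_pair z + row_pair z'.
Proof. by rewrite /row_pair scale_row_mx add_row_mx. Qed.

Lemma row_pair_inj : injective row_pair.
Proof. by move=> [x1 x2] [y1 y2] /eq_row_mx /= [-> ->]. Qed.

Definition slice_mx X : 'M[R]_(m, p + p) := \matrix_(i < m) row_pair (b X (delta_mx 0 i)).

Lemma slice_mxE X Y : row_pair (b X Y) = Y *m slice_mx X.
Proof.
apply: (linear_mulmxE (f := fun Y => row_pair (b X Y))) => a Y1 Y2.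
by rewrite b_linr row_pair_linear.
Qed.

Lemma slice_mx_linear a X X' : slice_mx (a *: X + X') = a *: slice_mx X + slice_mx X'.
Proof.
apply/row_matrixP => i; rewrite !linearD !linearZ /= !rowK b_linl.
exact: row_pair_linear.
Qed.

Lemma slice_mx_rank_le r (C : 'M[R]_(r, p)) X :
  (forall Y, ((b X Y).1 <= C)%MS /\ ((b X Y).2 <= C)%MS) ->
  (\rank (slice_mx X) <= \rank C + \rank C)%N.
Proof.
move=> b_C.
have -> : slice_mx X = row_mx (\matrix_(i < m) (b X (delta_mx 0 i)).1)
                                (\matrix_(i < m) (b X (delta_mx 0 i)).2).
  by apply/row_matrixP => i; rewrite row_row_mx !rowK.
apply: leq_trans (mxrank_row_mx_le _ _) _.
by apply: leq_add; apply: mxrankS; apply/row_subP => i; rewrite rowK; case: (b_C (delta_mx 0 i)).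
Qed.

Let norm_ge0 x : P x -> 0 <= bform M x x.
Proof. by move=> Px; case: (eqVneq x 0) => [->|x_neq0]; rewrite ?bform0l // ltW ?P_pos. Qed.

Let norm_eq0 x : P x -> bform M x x = 0 -> x = 0.
Proof.
by move=> Px xx0; apply/eqP/contraT => /(P_pos Px); rewrite xx0 ltxx.
Qed.

Lemma b_diag_snd Y : (b Y Y).2 = 0.
Proof.
have /= b2N := congr1 snd (b_swap Y Y).
have : (b Y Y).2 *+ 2 = 0 by rewrite mulr2n {1}b2N addNr.
by rewrite -scaler_nat => /eqP; rewrite scaler_eq0 pnatr_eq0 => /eqP.
Qed.

(* Flatness gives <<b(y,T), b(T,y)>> = <<b(y,y), b(T,T)>>, and by the symmetry of b the left
   side is the sum of the squared norms of the two components of b(y,T). *)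
Lemma flat_diag0_row y : b y y = 0 -> forall T, b y T = 0.
Proof.
move=> yy0 T; have := b_flat y y T T; rewrite yy0 (b_swap y T) /Wip /=.
rewrite !bform0l bformNr subrr sub0r opprK => /eqP; rewrite oppr_eq0 => /eqP norm_sum0.
have [P1 P2] := b_in_P y T.
have := norm_ge0 P1; have := norm_ge0 P2 => ge0_2 ge0_1.
have norm1 : bform M (b y T).1 (b y T).1 = 0 by lra.
have norm2 : bform M (b y T).2 (b y T).2 = 0 by lra.
by rewrite [b y T]surjective_pairing (norm_eq0 P1 norm1) (norm_eq0 P2 norm2).
Qed.

Section Regular.
Variable X0 : 'rV[R]_m.
Hypothesis X0_max : forall X, (\rank (slice_mx X) <= \rank (slice_mx X0))%N.

(* By regularity b(X, y) lies in the image of b(X0, .), to which it is orthogonal by flatness;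
   for X = y the norm of b(y, y) thus vanishes. *)
Lemma regular_kernel_diag0 y : y *m slice_mx X0 = 0 -> b y y = 0.
Proof.
move=> yX0.
have X0y : b X0 y = 0 by apply: row_pair_inj; rewrite slice_mxE yX0 /row_pair row_mx0.
have [D yyD] : exists D, b y y = b X0 D.
  have /submxP[D yD] : (y *m slice_mx y <= slice_mx X0)%MS.
    apply: max_rank_pencil_sub yX0 => t.
    by rewrite addrC -slice_mx_linear.
  by exists D; apply: row_pair_inj; rewrite !slice_mxE.
have : Wip M (b y y) (b y y) = 0.
  rewrite {2}yyD; have := b_flat y y X0 D.
  by rewrite X0y /Wip /= !bform0r subrr subr0.
rewrite /Wip b_diag_snd bform0l subr0 => /(norm_eq0 (proj1 (b_in_P y y))) yy1.
by rewrite [b y y]surjective_pairing yy1 b_diag_snd.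
Qed.

Lemma regular_kernel y : y *m slice_mx X0 = 0 -> right_kernel b y.
Proof.
move=> /regular_kernel_diag0 /flat_diag0_row yT0 X.
by rewrite b_swap yT0 oppr0.
Qed.

End Regular.

Lemma flat_kernel_dim_ge d :
  (forall X, (\rank (slice_mx X) + d <= m)%N) -> dim_ge (right_kernel b) d.
Proof.
move=> rank_le.
have [X0 X0_max] :=
  @bounded_argmax _ (fun X => \rank (slice_mx X)) m 0 (fun X => rank_leq_row _).
apply: (@dim_ge_rank _ _ _ _ (kermx (slice_mx X0))).
  by move=> y /sub_kermxP; apply: regular_kernel.
by rewrite mxrank_ker; have := rank_le X0; lia.
Qed.

End FlatForm.

Section Proposition5.
Variables (R : realType) (n p : nat) (G J : 'M[R]_(2 * n)) (M : 'M[R]_p).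
Variables (alpha : 'rV[R]_(2 * n) -> 'rV[R]_(2 * n) -> 'rV[R]_p) (w v : 'rV[R]_p).
Hypotheses (G_pos : pos_def G) (M_lor : lorentzian M)
  (alpha_linl : forall (a : R) X Y Z, alpha (a *: X + Y) Z = a *: alpha X Z + alpha Y Z)
  (w_light : light_like M w) (v_light : light_like M v)
  (alpha_w : forall X Y, bform M (alpha X Y) w = - bform G X Y)
  (G_J : forall X Y, bform G (X *m J) (Y *m J) = bform G X Y)
  (S_cap_Sperp : forall z, (inS (beta J alpha) z /\ inSperp M (beta J alpha) z) <->
                           exists a b : R, z = (a *: v, b *: v))
  (deg : degenerate M (beta J alpha)).

Local Notation b := (beta J alpha).

Let M_sym : forall x y, bform M x y = bform M y x := bformC (proj1 M_lor).

Lemma alpha0l Z : alpha 0 Z = 0.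
Proof.
have := alpha_linl 1 0 0 Z; rewrite !scale1r addr0 => a00.
by apply: (@addrI _ (alpha 0 Z)); rewrite addr0 -a00.
Qed.

Lemma beta00 : b 0 0 = 0.
Proof. by rewrite /beta !mul0mx !alpha0l addr0 subr0. Qed.

Lemma inS_beta X Y : inS b (b X Y).
Proof.
exists 1%N, (fun _ => 1), (fun _ => X), (fun _ => Y).
by rewrite big_ord1 scale1r.
Qed.

Lemma beta_orth_v X Y : bform M (b X Y).1 v = 0 /\ bform M (b X Y).2 v = 0.
Proof.
have [_ v0_perp] : inS b (v, 0) /\ inSperp M b (v, 0).
  by apply/S_cap_Sperp; exists 1, 0; rewrite scale1r scale0r.
have [_ v1_perp] : inS b (0, v) /\ inSperp M b (0, v).
  by apply/S_cap_Sperp; exists 0, 1; rewrite scale1r scale0r.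
have := v0_perp _ (inS_beta X Y); have := v1_perp _ (inS_beta X Y).
by rewrite /Wip /= !bform0l subr0 sub0r => /eqP; rewrite oppr_eq0 !(M_sym v) => /eqP.
Qed.

Lemma beta_fst_w X Y : bform M (b X Y).1 w = - (2 * bform G X Y).
Proof. by rewrite bformDl !alpha_w G_J; ring. Qed.

Lemma exists_nonzero_vector : exists X : 'rV[R]_(2 * n), X != 0.
Proof.
case: (posnP (2 * n)) => [n0|n_gt0].
  have [z [z_neq0 [[k [c [X [Y z_def]]]] _]]] := deg.
  have all0 (X0 : 'rV[R]_(2 * n)) : X0 = 0.
    by apply/rowP => -[j lt_j]; exfalso; move: lt_j; rewrite n0.
  move: z_neq0; rewrite z_def big1 ?eqxx // => i _.
  by rewrite (all0 (X i)) (all0 (Y i)) beta00 scaler0.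
exists (delta_mx 0 (Ordinal n_gt0)); apply/eqP => /matrixP/(_ 0 (Ordinal n_gt0)).
by rewrite !mxE !eqxx => /eqP; rewrite oner_eq0.
Qed.

(* If <v, w> = 0 the light-like vectors v and w are proportional, but v is orthogonal to
   beta(X, X)_1 while <beta(X, X)_1, w> = -2 |X|^2 is not zero. *)
Lemma vw_neq0 : bform M v w != 0.
Proof.
have [X X_neq0] := exists_nonzero_vector; apply/eqP => vw0.
have [c v_def] := lorentzian_null_orth_colinear M_lor v_light w_light vw0.
have := proj1 (beta_orth_v X X); rewrite v_def bformZr beta_fst_w.
have XX_gt0 := proj2 G_pos X X_neq0.
move=> /eqP; rewrite mulf_eq0 oppr_eq0 mulf_eq0 pnatr_eq0 (gt_eqF XX_gt0) /= orbF => /eqP c0.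
by case: v_light; rewrite v_def c0 scale0r eqxx.
Qed.

Let v_null := proj2 v_light.
Let w_null := proj2 w_light.

Lemma span_vw_lorentzian_plane : lorentzian_plane M v w.
Proof. exact: null_pair_lorentzian_plane (proj1 M_lor) v_null w_null vw_neq0. Qed.

Hypothesis J2 : J *m J = - 1%:M.

Lemma mulmxJJ (X : 'rV[R]_(2 * n)) : X *m J *m J = - X.
Proof. by rewrite -mulmxA J2 mulmxN mulmx1. Qed.

Lemma beta_snd_w X Y : bform M (b X Y).2 w = - (2 * bform G X (Y *m J)).
Proof.
by rewrite bformDl bformNl !alpha_w -[bform G (X *m J) Y]G_J mulmxJJ bformNl; ring.
Qed.

Variable pi : 'rV[R]_p -> 'rV[R]_p.
Hypothesis pi_proj : is_orth_proj_perp M v w pi.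

Lemma beta_decomp c : bform M (c *: v) w = -1 -> forall X Y,
  b X Y = (pi (b X Y).1 + (2 * bform G X Y) *: (c *: v),
           pi (b X Y).2 + (2 * bform G X (Y *m J)) *: (c *: v)).
Proof.
move=> cvw X Y; have [orth1 orth2] := beta_orth_v X Y.
have decomp := orth_v_decomp (proj1 M_lor) v_null vw_neq0 pi_proj cvw.
rewrite [LHS]surjective_pairing {1}(decomp _ orth1) {1}(decomp _ orth2).
by rewrite beta_fst_w beta_snd_w !opprK.
Qed.

Hypotheses (alpha_sym : forall X Y, alpha X Y = alpha Y X) (b_flat : flat M b).

Lemma alpha_linr a X Y Z : alpha Z (a *: X + Y) = a *: alpha Z X + alpha Z Y.
Proof. by rewrite alpha_sym alpha_linl !(alpha_sym Z). Qed.

Lemma alphaNr X Z : alpha Z (- X) = - alpha Z X.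
Proof.
by have := alpha_linr (-1) X 0 Z; rewrite !scaleN1r !addr0 (alpha_sym Z 0) alpha0l addr0.
Qed.

Lemma beta_linl a X X' Y : b (a *: X + X') Y = a *: b X Y + b X' Y.
Proof.
rewrite /beta mulmxDl -scalemxAl !alpha_linl.
by apply: injective_projections; rewrite /= ?scalerDr ?scalerBr ?scalerN ?opprD addrACA.
Qed.

Lemma beta_linr a X Y Y' : b X (a *: Y + Y') = a *: b X Y + b X Y'.
Proof.
rewrite /beta mulmxDl -scalemxAl !alpha_linr.
by apply: injective_projections; rewrite /= ?scalerDr ?scalerBr ?scalerN ?opprD addrACA.
Qed.

Lemma beta_swap X Y : b Y X = ((b X Y).1, - (b X Y).2).
Proof.
rewrite /beta opprB (alpha_sym Y X) (alpha_sym (Y *m J) (X *m J)).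
by rewrite (alpha_sym Y (X *m J)) (alpha_sym (Y *m J) X).
Qed.

Lemma beta_snd_fst X Y : (b X Y).2 = (b X (Y *m J)).1.
Proof. by rewrite /= mulmxJJ alphaNr. Qed.

Lemma inU0_beta_fst X Y : inU0 b (b X Y).1.
Proof. by exists (b X Y).2; rewrite -surjective_pairing; apply: inS_beta. Qed.

Lemma inU0_beta_snd X Y : inU0 b (b X Y).2.
Proof. by rewrite beta_snd_fst; apply: inU0_beta_fst. Qed.

Let pi_lin := pi_linear (proj1 M_lor) v_null w_null vw_neq0 pi_proj.
Let pi_opp := pi_oppr (proj1 M_lor) v_null w_null vw_neq0 pi_proj.
Let orth_spacelike := null_pair_orth_spacelike (proj1 M_lor) v_null w_null vw_neq0 M_lor.
Let pi_pair_lin := pi_pair_linear (proj1 M_lor) v_null w_null vw_neq0 pi_proj.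

Local Notation beta1 := (fun X Y => (pi (b X Y).1, pi (b X Y).2)).

Lemma beta1_flat : flat M beta1.
Proof.
move=> X Y Z T; rewrite !(Wip_pi (proj1 M_lor) v_null vw_neq0 pi_proj); last 4 first.
- 1-4: exact: beta_orth_v.
exact: b_flat.
Qed.

Hypothesis v_U0 : inU0 b v.

Lemma beta1_kernel_dim s : has_dim (inU0 b) s -> (s <= n)%N ->
  dim_ge (right_kernel beta1) (2 * n - 2 * s + 2).
Proof.
move=> /has_dim_sub[U U0_sub] s_le_n.
pose P_pi := \matrix_(i < p) pi (delta_mx 0 i).
have piE : forall x, pi x = x *m P_pi := linear_mulmxE pi_lin.
have rank_lt : (\rank (U *m P_pi) < s)%N.
  apply: (mxrank_mul_lt (proj1 v_light) (U0_sub _ v_U0)).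
  by rewrite -piE (pi_v0 (proj1 M_lor) v_null w_null vw_neq0 pi_proj).
apply: (flat_kernel_dim_ge (P := fun x => bform M x v = 0 /\ bform M x w = 0)).
- by move=> a X X' Y; cbv beta; rewrite beta_linl; apply: pi_pair_lin.
- by move=> a X Y Y'; cbv beta; rewrite beta_linr; apply: pi_pair_lin.
- by move=> X Y; cbv beta; rewrite beta_swap; congr pair; apply: pi_opp.
- exact: beta1_flat.
- by move=> x [xv xw]; apply: orth_spacelike.
- by move=> X Y; do !split; first [exact: (pi_orth_v pi_proj) | exact: (pi_orth_w pi_proj)].
move=> X; suff sub Y : (pi (b X Y).1 <= U *m P_pi)%MS /\ (pi (b X Y).2 <= U *m P_pi)%MS.
  by have := slice_mx_rank_le (b := beta1) sub; lia.
by split; rewrite piE submxMr // U0_sub //; [exact: inU0_beta_fst | exact: inU0_beta_snd].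
Qed.

End Proposition5.

Theorem proposition5 (R : realType) (n p : nat)
    (G J : 'M[R]_(2 * n)) (M : 'M[R]_p)
    (alpha : 'rV[R]_(2 * n) -> 'rV[R]_(2 * n) -> 'rV[R]_p)
    (w v : 'rV[R]_p) :
  (* V^{2n}: J^2 = -I, positive definite inner product, J an isometry *)
  J *m J = - 1%:M ->
  pos_def G ->
  (forall X Y, bform G (X *m J) (Y *m J) = bform G X Y) ->
  (* L^p, p >= 2, Lorentzian *)
  (2 <= p)%N ->
  lorentzian M ->
  (* alpha symmetric bilinear *)
  (forall (a : R) X Y Z, alpha (a *: X + Y) Z = a *: alpha X Z + alpha Y Z) ->
  (forall X Y, alpha X Y = alpha Y X) ->
  (* light-like w *)
  light_like M w ->
  (forall X Y, bform M (alpha X Y) w = - bform G X Y) ->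
  (* beta flat, S(beta) degenerate *)
  flat M (beta J alpha) ->
  degenerate M (beta J alpha) ->
  (* v light-like in U_0^s with S cap S^perp = span{v} (+) span{v} *)
  inU0 (beta J alpha) v ->
  light_like M v ->
  (forall z, (inS (beta J alpha) z /\ inSperp M (beta J alpha) z) <->
             exists a b : R, z = (a *: v, b *: v)) ->
  lorentzian_plane M v w /\
  forall pi : 'rV[R]_p -> 'rV[R]_p, is_orth_proj_perp M v w pi ->
    let beta1 := fun X Y => (pi (beta J alpha X Y).1, pi (beta J alpha X Y).2) in
    (forall c : R, bform M (c *: v) w = -1 ->
       forall X Y,
         beta J alpha X Y =
         ((beta1 X Y).1 + (2 * bform G X Y) *: (c *: v),
          (beta1 X Y).2 + (2 * bform G X (Y *m J)) *: (c *: v))) /\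
    (forall s : nat, has_dim (inU0 (beta J alpha)) s -> (s <= n)%N ->
       dim_ge (right_kernel beta1) (2 * n - 2 * s + 2)).
Proof.
move=> J2 G_pos G_J _ M_lor alpha_linl alpha_sym w_light alpha_w b_flat deg v_U0 v_light
  S_cap_Sperp.
split; first exact: (span_vw_lorentzian_plane G_pos M_lor alpha_linl w_light v_light
                       alpha_w G_J S_cap_Sperp deg).
move=> pi pi_proj beta1; split.
  exact: (beta_decomp G_pos M_lor alpha_linl w_light v_light alpha_w G_J S_cap_Sperp deg
           J2 pi_proj).
exact: (beta1_kernel_dim G_pos M_lor alpha_linl w_light v_light alpha_w G_J S_cap_Sperp deg
         J2 pi_proj alpha_sym b_flat v_U0).
Qed.
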